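(* For the compromise min-max regret shortest path problem, for any fixed $s$-$t$ path $x\in\mathcal{X}$, the number of changepoints of $reg(x,\cdot)$ is bounded by the number of extreme efficient solutions of the bicriteria shortest path problem $\min \{ (\sum_{e\in E: x_e = 1} 2\hat{c}_e y_e,\ \sum_{e\in E} \hat{c}_e y_e) : y\in\mathcal{X}\}$, i.e., $|\overline{\Lambda}(x)| \le |\mathcal{E}|$, where $\mathcal{E}$ is the set of those extreme efficient solutions (solutions obtainable as optima of weighted-sum scalarizations).
   Context: Let $G=(V,E)$ be a graph and $\mathcal{X}\subseteq\{0,1\}^{E}$ the set of (incidence vectors of) simple $s$-$t$ paths in $G$. Nominal edge costs $\hat{c}\ge 0$ are given, and for $\lambda\in[0,1]$ the uncertainty set is $\mathcal{U}(\lambda)=\prod_{e\in E}[(1-\lambda)\hat{c}_e,(1+\lambda)\hat{c}_e]$. For a fixed path $x$, the regret is $reg(x,\lambda)=\max_{c\in\mathcal{U}(\lambda)} \big(c^t x - \min_{y\in\mathcal{X}} c^t y\big)$, which is a piecewise linear function of $\lambda$; $\overline{\Lambda}(x)\subseteq[0,1]$ denotes its set of changepoints. One has $reg(x,\lambda)=\sum_{e: x_e=1}(1+\lambda)\hat{c}_e - \min_{y\in\mathcal{X}}\big(\lambda\sum_{e:x_e=1}2\hat{c}_e y_e + (1-\lambda)\sum_{e\in E}\hat{c}_e y_e\big)$ up to sign conventions of the rewriting, so the inner minimization is a weighted sum of the two objectives of the bicriteria problem above. The compromise problem is $\min_{x\in\mathcal{X}} \int_0^1 reg(x,\lambda)\,d\lambda$.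 *)

From HB Require Import structures.
From mathcomp Require Import all_boot all_order all_algebra.
From mathcomp Require Import boolp classical_sets reals.
Set Implicit Arguments. Unset Strict Implicit. Unset Printing Implicit Defensive.
Import Order.TTheory GRing.Theory Num.Theory.
Local Open Scope ring_scope.
Local Open Scope classical_set_scope.

Section Graph.
Variables (V E : finType) (src dst : E -> V).

Fixpoint walk (u : V) (es : seq E) : bool :=
  if es is e :: es' then (src e == u) && walk (dst e) es' else true.

Definition simple_path (s t : V) (es : seq E) : bool :=
  [&& walk s es, last s (map dst es) == t & uniq (s :: map dst es)].

(* The set X of (incidence vectors, i.e. edge sets, of) simple s-t paths. *)
Definition st_paths (s t : V) : set {set E} :=
  [set x | exists es : seq E, simple_path s t es /\ x = [set e in es]].

End Graph.

Section Regret.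
Variables (R : realType) (E : finType).

Definition cost (c : E -> R) (y : {set E}) : R := \sum_(e in y) c e.

Definition unc_set (chat : E -> R) (lam : R) : set (E -> R) :=
  [set c | forall e, (1 - lam) * chat e <= c e <= (1 + lam) * chat e].

Definition regret (X : set {set E}) (chat : E -> R) (x : {set E}) (lam : R) : R :=
  sup [set cost c x - inf [set cost c y | y in X] | c in unc_set chat lam].

Definition changepoints (f : R -> R) : set R :=
  [set lam | 0 <= lam <= 1 /\
     ~ (exists eps a b : R, 0 < eps /\
          forall mu, 0 <= mu <= 1 -> `|mu - lam| < eps -> f mu = a * mu + b)].

Definition obj1 (chat : E -> R) (x y : {set E}) : R := \sum_(e in x :&: y) 2 * chat e.
Definition obj2 (chat : E -> R) (y : {set E}) : R := \sum_(e in y) chat e.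
Definition obj (chat : E -> R) (x y : {set E}) : R * R := (obj1 chat x y, obj2 chat y).

(* y is an extreme efficient solution: it is an optimum of a weighted-sum
   scalarization with strictly positive weights (lam, 1 - lam), and every other
   optimum of that scalarization has the same objective vector (so obj y is an
   extreme supported nondominated point). *)
Definition extreme_efficient (X : set {set E}) (chat : E -> R) (x y : {set E}) : Prop :=
  X y /\ exists lam : R, 0 < lam < 1 /\
    forall z, X z ->
      lam * obj1 chat x y + (1 - lam) * obj2 chat y
        <= lam * obj1 chat x z + (1 - lam) * obj2 chat z /\
      (lam * obj1 chat x z + (1 - lam) * obj2 chat z
         = lam * obj1 chat x y + (1 - lam) * obj2 chat y -> obj chat x z = obj chat x y).

(* The extreme efficient solutions, counted up to equal objective vectors
   (i.e. the set of extreme nondominated points). *)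
Definition extreme_points (X : set {set E}) (chat : E -> R) (x : {set E}) : set (R * R) :=
  [set obj chat x y | y in extreme_efficient X chat x].

End Regret.

From HB Require Import structures.
From mathcomp Require Import all_boot all_order all_algebra.
From mathcomp Require Import boolp classical_sets reals.
From mathcomp Require Import ring lra.
Import Order.TTheory GRing.Theory Num.Theory.
Local Open Scope ring_scope.
Local Open Scope classical_set_scope.
Set Implicit Arguments. Unset Strict Implicit.

(* For lam >= 0 the worst scenario raises the costs on x to their maximum and
   lowers all others to their minimum, so reg(x, lam) is the upper envelope
   of the finitely many lines lam |-> f_lam(x) - f_lam(y), y in X, where
   f_lam = lam f1 + (1 - lam) f2 is the weighted-sum scalarization.
   Just right of any lam some line is maximal.  At a changepoint lam, which
   lies in (0, 1), the maximal path y is optimal for a weight in (lam, 1);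
   any other optimum there touches the line of y inside the interval where
   that line dominates, so it has the same line, hence the same objective
   vector, and y is extreme efficient.  If two changepoints lam1 < lam2 gave
   the same objective vector, one line would be maximal just right of lam1
   and just right of lam2, hence on a neighbourhood of lam2, which then is
   no changepoint. *)

Section Lines.
Variable R : realFieldType.
Implicit Types (l k j : R * R) (lam mu p m q eps : R).

Lemma exists_pos_le2 (a b : R) : 0 < a -> 0 < b -> exists d, [/\ 0 < d, d <= a & d <= b].
Proof.
move=> a0 b0; exists (Order.min a b).
by split; rewrite ?lt_min ?a0 ?b0 // ge_min lexx ?orbT.
Qed.

Definition line_eval l mu : R := l.1 * mu + l.2.

Definition dominates_right l k lam eps :=
  forall mu, lam <= mu -> mu < lam + eps -> line_eval k mu <= line_eval l mu.

Lemma dominates_right_shrink l k lam eps eps' :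
  eps' <= eps -> dominates_right l k lam eps -> dominates_right l k lam eps'.
Proof. by move=> le_eps dom mu h1 h2; apply: dom => //; lra. Qed.

Lemma dominates_right_trans l k j lam eps :
  dominates_right l k lam eps -> dominates_right k j lam eps ->
  dominates_right l j lam eps.
Proof. by move=> dlk dkj mu h1 h2; apply: le_trans (dlk _ h1 h2); apply: dkj. Qed.

Lemma dominates_right_comparable l k lam : exists2 eps, 0 < eps &
  dominates_right l k lam eps \/ dominates_right k l lam eps.
Proof.
wlog le_kl : l k / line_eval k lam <= line_eval l lam => [hwlog|].
  have [|/ltW/hwlog [eps eps0 dom]] := lerP (line_eval k lam) (line_eval l lam).
    exact: hwlog.
  by exists eps => //; case: dom; [right|left].
set d := line_eval l lam - line_eval k lam; set s := l.1 - k.1.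
have diffE mu : line_eval l mu - line_eval k mu = d + s * (mu - lam).
  by rewrite /d /s /line_eval; ring.
have [d0|d0] := ltrP 0 d; last first.
  have {}d0 : d = 0 by apply/le_anti; rewrite d0 subr_ge0.
  exists 1 => //; have [s0|s0] := lerP 0 s; [left|right] => mu h1 _;
    have := diffE mu; rewrite d0 add0r.
  - have : 0 <= s * (mu - lam) by apply: mulr_ge0; lra.
    lra.
  - have : s * (mu - lam) <= 0 by apply: mulr_le0_ge0; lra.
    lra.
(* before lam + d / (|s| + 1) the slope difference s cannot close the gap d *)
exists (d / (`|s| + 1)); first by rewrite divr_gt0 // ltr_wpDl.
left => mu h1 h2.
have {h2} : (mu - lam) * (`|s| + 1) < d by rewrite -ltr_pdivlMr ?ltr_wpDl //; lra.
have : 0 <= (s + `|s|) * (mu - lam).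
  by apply: mulr_ge0; [have := ler_norm (- s); rewrite normrN | ]; lra.
have := diffE mu; lra.
Qed.

Lemma envelope_right (T : eqType) (f : T -> R * R) (s : seq T) lam : s != [::] ->
  exists2 y, y \in s & exists2 eps, 0 < eps &
    forall z, z \in s -> dominates_right (f y) (f z) lam eps.
Proof.
elim: s => [//|a s IHs] _.
have [->|/IHs [y ys [eps eps0 ydom]]] := eqVneq s [::].
  by exists a; rewrite ?mem_head //; exists 1 => // z; rewrite inE => /eqP-> mu.
have [eps' eps'0 cmp] := dominates_right_comparable (f y) (f a) lam.
have [d [d0 le1 le2]] := exists_pos_le2 eps0 eps'0.
have ydom' z : z \in s -> dominates_right (f y) (f z) lam d.
  by move=> zs; apply: dominates_right_shrink le1 (ydom z zs).
case: cmp => [ya|ay].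
- exists y; first by rewrite inE ys orbT.
  exists d => // z; rewrite inE => /predU1P [->|/ydom' //].
  exact: dominates_right_shrink ya.
- exists a; first exact: mem_head.
  exists d => //; have ay' := dominates_right_shrink le2 ay.
  move=> z; rewrite inE => /predU1P [-> mu _ _|/ydom' yz]; first exact: lexx.
  exact: dominates_right_trans ay' yz.
Qed.

Lemma envelope_left (T : eqType) (f : T -> R * R) (s : seq T) lam : s != [::] ->
  exists2 y, y \in s & exists2 eps, 0 < eps & forall z, z \in s ->
    forall mu, lam - eps < mu -> mu <= lam -> line_eval (f z) mu <= line_eval (f y) mu.
Proof.
pose mirror l : R * R := (- l.1, l.2).
have mirrorE l mu : line_eval (mirror l) (- mu) = line_eval l mu.
  by rewrite /line_eval /= mulrNN.
move=> /(envelope_right (mirror \o f) (- lam)) [y ys [eps eps0 ydom]].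
exists y => //; exists eps => // z zs mu h1 h2.
by rewrite -(mirrorE (f z)) -(mirrorE (f y)); apply: ydom => //; lra.
Qed.

Lemma line_le_between l k p m q : p <= m -> m <= q ->
  line_eval k p <= line_eval l p -> line_eval k q <= line_eval l q ->
  line_eval k m <= line_eval l m.
Proof.
rewrite /line_eval => pm mq hp hq.
have [a0|a0] := lerP k.1 l.1.
  have : 0 <= (l.1 - k.1) * (m - p) by apply: mulr_ge0; lra.
  lra.
have : 0 <= (k.1 - l.1) * (q - m) by apply: mulr_ge0; lra.
lra.
Qed.

Lemma line_eq_of_touch l k p m q : p < m -> m < q ->
  line_eval k p <= line_eval l p -> line_eval k q <= line_eval l q ->
  line_eval k m = line_eval l m -> l = k.
Proof.
rewrite /line_eval => pm mq hp hq hm.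
have slope_le : l.1 - k.1 <= 0.
  by rewrite -(pmulr_lle0 _ (_ : 0 < m - p)); lra.
have slope_ge : 0 <= l.1 - k.1.
  by rewrite -(pmulr_lge0 _ (_ : 0 < q - m)); lra.
have e1 : l.1 = k.1 by lra.
have e2 : l.2 = k.2 by rewrite e1 in hm; lra.
by rewrite [l]surjective_pairing [k]surjective_pairing e1 e2.
Qed.

End Lines.

Lemma enum_bounded_set (T : eqType) (S : set T) n :
  (forall L : seq T, uniq L -> (forall l, l \in L -> S l) -> (size L <= n)%N) ->
  exists L : seq T, uniq L /\ [set` L] = S.
Proof.
move=> bound.
pose ok k := `[< exists L : seq T, [/\ uniq L, forall l, l \in L -> S l & size L = k] >].
have ok0 : exists k, ok k by exists 0%N; apply/asboolP; exists [::].
have okn k : ok k -> (k <= n)%N by move=> /asboolP [L [uL SL <-]]; exact: bound.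
case: (ex_maxnP ok0 okn) => k /asboolP [L [uL SL sizeL]] maxk.
exists L; split => //; apply/seteqP; split => [l /SL //|l Sl /=].
apply/negPn/negP => lL.
have /maxk : ok k.+1.
  apply/asboolP; exists (l :: L); split => /=; first by rewrite lL uL.
    by move=> j /predU1P [->|/SL].
  by rewrite sizeL.
by rewrite ltnn.
Qed.

Lemma enum_image (T : finType) (U : eqType) (f : T -> U) (A : set T) :
  exists P : seq U, uniq P /\ [set` P] = f @` A.
Proof.
exists (undup [seq f y | y <- enum T & `[< A y >]]); split; first exact: undup_uniq.
apply/seteqP; split => [p /=|_ [y Ay <-] /=]; rewrite mem_undup.
  by case/mapP => y; rewrite mem_filter => /andP [/asboolP Ay _] ->; exists y.
by apply: map_f; rewrite mem_filter mem_enum andbT; apply/asboolP.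
Qed.

Lemma sup_eq_max (R : realType) (S : set R) v : S v -> ubound S v -> sup S = v.
Proof.
move=> Sv ubv; apply/le_anti/andP; split; first exact: ge_sup (ex_intro _ v Sv) ubv.
by apply: sup_upper_bound => //; split; exists v.
Qed.

Lemma inf_eq_min (R : realType) (S : set R) v : S v -> lbound S v -> inf S = v.
Proof.
move=> Sv lbv; apply/le_anti/andP; split; last exact: lb_le_inf (ex_intro _ v Sv) lbv.
by apply: ge_inf => //; exists v.
Qed.

Section Regret.
Variables (R : realType) (E : finType) (X : set {set E}) (chat : E -> R) (x : {set E}).
Hypothesis chat_ge0 : forall e, 0 <= chat e.

Definition scalarization lam y : R := lam * obj1 chat x y + (1 - lam) * obj2 chat y.

Definition regret_line y : R * R :=
  (obj1 chat x x - obj2 chat x - (obj1 chat x y - obj2 chat y), obj2 chat x - obj2 chat y).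

Lemma regret_lineE lam y :
  line_eval (regret_line y) lam = scalarization lam x - scalarization lam y.
Proof. by rewrite /line_eval /scalarization /=; ring. Qed.

Lemma eq_regret_line y z : regret_line y = regret_line z <-> obj chat x y = obj chat x z.
Proof.
rewrite /regret_line /obj; split; first by case=> e1 e2; congr pair; lra.
by case=> -> ->.
Qed.

Lemma cost_mkcond (c : E -> R) y : cost c y = \sum_e (if e \in y then c e else 0).
Proof. exact: big_mkcond. Qed.

Definition worst_scenario lam e : R :=
  if e \in x then (1 + lam) * chat e else (1 - lam) * chat e.

Lemma cost_worst_scenario lam y : cost (worst_scenario lam) y = scalarization lam y.
Proof.
rewrite /cost /scalarization /obj1 /obj2 !mulr_sumr.
rewrite big_mkcond [X in _ = X + _]big_mkcond [X in _ = _ + X]big_mkcond -big_split /=.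
apply: eq_bigr => e _; rewrite finset.in_setI /worst_scenario.
by case: (e \in x); case: (e \in y) => /=; ring.
Qed.

Lemma worst_scenario_unc lam : 0 <= lam -> unc_set chat lam (worst_scenario lam).
Proof.
move=> lam0 e; rewrite /worst_scenario; have := chat_ge0 e.
by case: (e \in x) => ce; apply/andP; split; nra.
Qed.

Lemma worst_scenario_max lam c y : unc_set chat lam c ->
  cost c x - cost c y <= cost (worst_scenario lam) x - cost (worst_scenario lam) y.
Proof.
move=> Uc; rewrite !cost_mkcond -!sumrB; apply: ler_sum => e _ /=.
by rewrite /worst_scenario; have := Uc e; case: (e \in x); case: (e \in y) => /andP [] /=; lra.
Qed.

Lemma regret_envelope lam y0 : 0 <= lam -> X y0 ->
  (forall y, X y -> line_eval (regret_line y) lam <= line_eval (regret_line y0) lam) ->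
  regret X chat x lam = line_eval (regret_line y0) lam.
Proof.
move=> lam0 Xy0 y0max; set w := worst_scenario lam.
have y0min z : X z -> cost w y0 <= cost w z.
  by move/y0max; rewrite !regret_lineE -!cost_worst_scenario; lra.
rewrite regret_lineE -!cost_worst_scenario; apply: sup_eq_max.
  exists w; first exact: worst_scenario_unc.
  by rewrite (@inf_eq_min _ _ (cost w y0)) //; [exists y0 | move=> _ [z /y0min ? <-]].
move=> _ [c Uc <-]; rewrite lerBlDr -lerBlDl.
apply: lb_le_inf; first by exists (cost c y0), y0.
move=> _ [z Xz <-]; rewrite lerBlDl -lerBlDr.
apply: le_trans (worst_scenario_max z Uc) _.
by rewrite lerD2l lerN2; exact: y0min.
Qed.
End Regret.

Section Changepoints.
Variables (R : realType) (E : finType) (X : set {set E}) (chat : E -> R) (x : {set E}).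
Hypotheses (chat_ge0 : forall e, 0 <= chat e) (Xx : X x).

Let F := regret X chat x.
Let ell := regret_line chat x.
Let feasible := [seq y <- enum {set E} | `[< X y >]].

Lemma mem_feasible y : (y \in feasible) = `[< X y >].
Proof. by rewrite mem_filter mem_enum andbT. Qed.

Lemma feasible_neq0 : feasible != [::].
Proof. by apply/eqP => nil_feas; move: (mem_feasible x); rewrite nil_feas asboolT. Qed.

Definition optimal_right lam eps y0 :=
  forall y, X y -> dominates_right (ell y0) (ell y) lam eps.

Lemma exists_optimal_right lam :
  exists y0, X y0 /\ exists2 eps, 0 < eps & optimal_right lam eps y0.
Proof.
have [y0 + [eps eps0 dom]] := envelope_right ell lam feasible_neq0.
rewrite mem_feasible => /asboolP Xy0; exists y0; split => //; exists eps => // y Xy.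
by apply: dom; rewrite mem_feasible; apply/asboolP.
Qed.

Lemma changepoint_neq0 : ~ changepoints F 0.
Proof.
case=> _ []; have [y0 [Xy0 [eps eps0 opt]]] := exists_optimal_right 0.
exists eps, (ell y0).1, (ell y0).2; split => // mu /andP [mu0 _].
rewrite subr0 ger0_norm // => mu_lt.
by apply: regret_envelope => // y /opt; apply; rewrite ?add0r.
Qed.

Lemma changepoint_neq1 : ~ changepoints F 1.
Proof.
case=> _ []; have [y0 + [eps eps0 dom]] := envelope_left ell 1 feasible_neq0.
rewrite mem_feasible => /asboolP Xy0.
exists eps, (ell y0).1, (ell y0).2; split => // mu /andP [mu0 mu1].
rewrite distrC ger0_norm ?subr_ge0 // => mu_gt.
apply: regret_envelope => // y Xy; apply: dom => //; first by rewrite mem_feasible; apply/asboolP.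
lra.
Qed.

Lemma changepoint_extreme lam eps y0 : changepoints F lam -> X y0 -> 0 < eps ->
  optimal_right lam eps y0 -> extreme_efficient X chat x y0.
Proof.
move=> cp Xy0 eps0 opt; split => //.
have [/andP [lam0 lam1] _] := cp.
have lam_lt1 : 0 < 1 - lam.
  rewrite subr_gt0 lt_neqAle lam1 andbT; apply/eqP => lam_1.
  by apply: changepoint_neq1; rewrite -lam_1.
have [d [d0 d_eps d_1]] := exists_pos_le2 eps0 lam_lt1.
exists (lam + d / 2); split; [by apply/andP; split; lra | ].
move=> z Xz; have optz := opt z Xz.
have : line_eval (ell z) (lam + d / 2) <= line_eval (ell y0) (lam + d / 2).
  by apply: optz; lra.
rewrite !regret_lineE /scalarization => le_mid; split; first lra.
move=> tie; apply/esym/eq_regret_line.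
apply: (line_eq_of_touch (p := lam) (m := lam + d / 2) (q := lam + 3 * d / 4));
  [lra | lra | apply: optz; lra | apply: optz; lra |].
by rewrite !regret_lineE /scalarization; lra.
Qed.

Lemma changepoint_new_line l1 l2 e1 e2 y1 y2 : l1 < l2 -> 0 < e1 -> 0 < e2 ->
  X y1 -> optimal_right l1 e1 y1 -> optimal_right l2 e2 y2 ->
  obj chat x y1 = obj chat x y2 -> ~ changepoints F l2.
Proof.
move=> lt12 e10 e20 Xy1 opt1 opt2 /eq_regret_line same [_ []].
have l12 : 0 < l2 - l1 by rewrite subr_gt0.
have [d [d0 d_e1 d_l2]] := exists_pos_le2 e10 l12.
set m1 := l1 + d / 2; set m2 := l2 + e2 / 2.
have m1_l2 : 0 < l2 - m1 by rewrite /m1; lra.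
have l2_m2 : 0 < m2 - l2 by rewrite /m2; lra.
have [del [del0 del_m1 del_m2]] := exists_pos_le2 m1_l2 l2_m2.
exists del, (ell y1).1, (ell y1).2; split => // mu /andP [mu0 _].
rewrite ltr_distl => /andP [mu_gt mu_lt].
apply: regret_envelope => // y Xy.
apply: (@line_le_between _ _ _ m1 mu m2); [lra | lra | |].
- by apply: opt1 => //; rewrite /m1; lra.
- by rewrite same; apply: opt2 => //; rewrite /m2; lra.
Qed.

Lemma changepoints_size_le (L : seq R) (P : seq (R * R)) : uniq L ->
  (forall l, l \in L -> changepoints F l) ->
  (forall p, extreme_points X chat x p -> p \in P) -> (size L <= size P)%N.
Proof.
move=> uL cpL extP; have /choice [g gP] := exists_optimal_right.
rewrite -(size_map (fun lam => obj chat x (g lam))); apply: uniq_leq_size.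
  rewrite map_inj_in_uniq // => a b aL bL same.
  have [Xa [ea ea0 opta]] := gP a; have [Xb [eb eb0 optb]] := gP b.
  have [ab|ba|//] := ltgtP a b; exfalso.
  - exact: changepoint_new_line ab ea0 eb0 Xa opta optb same (cpL b bL).
  - exact: changepoint_new_line ba eb0 ea0 Xb optb opta (esym same) (cpL a aL).
move=> _ /mapP [lam lamL ->]; apply: extP; exists (g lam) => //.
have [Xg [e e0 opt]] := gP lam; exact: changepoint_extreme (cpL _ lamL) Xg e0 opt.
Qed.

End Changepoints.

Theorem lemma2 (R : realType) (V E : finType) (src dst : E -> V) (s t : V)
    (chat : E -> R) (chat_ge0 : forall e, 0 <= chat e)
    (x : {set E}) (hx : st_paths src dst s t x) :
  exists (L : seq R) (P : seq (R * R)),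
    [/\ uniq L, [set` L] = changepoints (regret (st_paths src dst s t) chat x),
        uniq P, [set` P] = extreme_points (st_paths src dst s t) chat x
      & (size L <= size P)%N].
Proof.
pose X := st_paths src dst s t.
have [P [uP eP]] := enum_image (obj chat x) (extreme_efficient X chat x).
have extP p : extreme_points X chat x p -> p \in P by rewrite /extreme_points -eP.
have [L [uL eL]] := enum_bounded_set
  (fun L uL cpL => changepoints_size_le chat_ge0 hx uL cpL extP).
have cpL l : l \in L -> changepoints (regret X chat x) l by rewrite -eL.
exists L, P; split => //; exact (changepoints_size_le chat_ge0 hx uL cpL extP).
Qed.
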